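(* Let $r,s$ be coprime integers, let $k,n\in\mathbb{Z}$ satisfy $-rk+sn=1$, and put $p:=rk$ (so $p+1=sn$). Let $\pi=\langle u,v\mid u^r=v^s\rangle$ with $m=u^nv^{-k}$, $l=v^sm^{-rs}$, and let $\tilde\pi=\langle \tilde u,\tilde v\mid \tilde u^{p}=\tilde v^{p+1}\rangle$ with $\tilde m=\tilde u\tilde v^{-1}$, $\tilde l=\tilde v^{p+1}\tilde m^{-p(p+1)}$. Then $\tilde u\mapsto u^n$, $\tilde v\mapsto v^k$ defines a surjective group homomorphism $\tilde\pi\to\pi$ sending $\tilde m\mapsto m$ and $\tilde l\mapsto l^{kn}$. *)

From Stdlib Require Import ZArith.
Open Scope Z_scope.

Record Grp := {
  carrier :> Type;
  gmul : carrier -> carrier -> carrier;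
  ginv : carrier -> carrier;
  gone : carrier;
  gmulA : forall x y z, gmul x (gmul y z) = gmul (gmul x y) z;
  gmul1l : forall x, gmul gone x = x;
  gmul1r : forall x, gmul x gone = x;
  gmulVl : forall x, gmul (ginv x) x = gone;
  gmulVr : forall x, gmul x (ginv x) = gone
}.

Arguments gmul {g} _ _.
Arguments ginv {g} _.
Arguments gone {g}.

Fixpoint gpow_nat {G : Grp} (x : G) (n : nat) : G :=
  match n with
  | O => gone
  | S n' => gmul x (gpow_nat x n')
  end.

Definition zpow {G : Grp} (x : G) (z : Z) : G :=
  match z with
  | Z0 => gone
  | Zpos q => gpow_nat x (Pos.to_nat q)
  | Zneg q => ginv (gpow_nat x (Pos.to_nat q))
  end.

Definition is_hom {G H : Grp} (f : G -> H) : Prop :=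
  forall x y, f (gmul x y) = gmul (f x) (f y).

(* (P, u, v) is the group < u, v | u^a = v^b >, i.e. it satisfies the
   relation and the universal property of this presentation. *)
Definition is_presentation2 (P : Grp) (u v : P) (a b : Z) : Prop :=
  zpow u a = zpow v b /\
  forall (H : Grp) (x y : H), zpow x a = zpow y b ->
    exists! f : P -> H, is_hom f /\ f u = x /\ f v = y.

(* The relation transfers because u^(n p) = (u^r)^(k n) = (v^s)^(k n) = v^(k (p+1)), using
   p + 1 = s n.  The image of [f] contains u = u^(s n - r k) = f(ũ^s ṽ^(-s)) and likewise v,
   and a homomorphism into a presented group whose image contains the generators is onto:
   the presentation maps into the image subgroup, and composing with the inclusion fixes
   the generators, hence is the identity.  Finally v^s = u^r is central, so
   f l̃ = v^(k s n) m^(-r k s n) = (v^s m^(-r s))^(k n). *)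
From Stdlib Require Import ZArith Lia ProofIrrelevance.
Open Scope Z_scope.

Arguments gmulA {_}. Arguments gmul1l {_}. Arguments gmul1r {_}.
Arguments gmulVl {_}. Arguments gmulVr {_}.

Section GroupPowers.
Context {G : Grp}.

Lemma ginv_unique (x y : G) : gmul x y = gone -> ginv x = y.
Proof.
  intro Hxy. rewrite <- (gmul1r (ginv x)), <- Hxy, gmulA, gmulVl, gmul1l. reflexivity.
Qed.

Lemma ginv_one : ginv (@gone G) = gone.
Proof. apply ginv_unique, gmul1l. Qed.

Lemma ginv_mul (a b : G) : ginv (gmul a b) = gmul (ginv b) (ginv a).
Proof.
  apply ginv_unique.
  rewrite gmulA, <- (gmulA a b), gmulVr, gmul1r, gmulVr. reflexivity.
Qed.

Lemma gpow_nat_succ_r (x : G) n : gpow_nat x (S n) = gmul (gpow_nat x n) x.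
Proof.
  induction n as [|n IHn]; simpl.
  - rewrite gmul1r, gmul1l. reflexivity.
  - simpl in IHn. rewrite IHn, gmulA, IHn. reflexivity.
Qed.

Lemma zpow_of_nat (x : G) n : zpow x (Z.of_nat n) = gpow_nat x n.
Proof. destruct n; simpl; [|rewrite SuccNat2Pos.id_succ]; reflexivity. Qed.

Lemma zpow_opp_of_nat (x : G) n : zpow x (- Z.of_nat n) = ginv (gpow_nat x n).
Proof.
  destruct n; simpl.
  - symmetry; apply ginv_one.
  - rewrite SuccNat2Pos.id_succ. reflexivity.
Qed.

Lemma zpow_succ (x : G) z : zpow x (Z.succ z) = gmul (zpow x z) x.
Proof.
  destruct (Z_le_gt_dec 0 z) as [Hz|Hz].
  - rewrite <- (Z2Nat.id z), <- Nat2Z.inj_succ, !zpow_of_nat by exact Hz.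
    apply gpow_nat_succ_r.
  - replace z with (- Z.of_nat (S (Z.to_nat (- z - 1)))) by lia.
    replace (Z.succ _) with (- Z.of_nat (Z.to_nat (- z - 1))) by lia.
    rewrite !zpow_opp_of_nat. simpl gpow_nat.
    rewrite ginv_mul, <- gmulA, gmulVl, gmul1r. reflexivity.
Qed.

Lemma zpow_pred (x : G) z : zpow x (Z.pred z) = gmul (zpow x z) (ginv x).
Proof.
  rewrite <- (Z.succ_pred z) at 2.
  rewrite zpow_succ, <- gmulA, gmulVr, gmul1r. reflexivity.
Qed.

Lemma zpow_add (x : G) a b : zpow x (a + b) = gmul (zpow x a) (zpow x b).
Proof.
  induction b as [|b IHb|b IHb] using Z.peano_ind.
  - rewrite Z.add_0_r. simpl. rewrite gmul1r. reflexivity.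
  - rewrite Z.add_succ_r, !zpow_succ, IHb, gmulA. reflexivity.
  - rewrite Z.add_pred_r, !zpow_pred, IHb, gmulA. reflexivity.
Qed.

Lemma zpow_1 (x : G) : zpow x 1 = x.
Proof. apply gmul1r. Qed.

Lemma zpow_opp (x : G) a : zpow x (- a) = ginv (zpow x a).
Proof.
  symmetry. apply ginv_unique. rewrite <- zpow_add, Z.add_opp_diag_r. reflexivity.
Qed.

Lemma zpow_mul (x : G) a b : zpow (zpow x a) b = zpow x (a * b).
Proof.
  induction b as [|b IHb|b IHb] using Z.peano_ind.
  - rewrite Z.mul_0_r. reflexivity.
  - rewrite zpow_succ, IHb, <- zpow_add, Z.mul_succ_r. reflexivity.
  - rewrite zpow_pred, IHb, <- zpow_opp, <- zpow_add, Z.mul_pred_r. reflexivity.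
Qed.

Definition gcommute (a b : G) : Prop := gmul a b = gmul b a.

Lemma gcommute_sym (a b : G) : gcommute a b -> gcommute b a.
Proof. unfold gcommute; auto. Qed.

Lemma gcommute_mul (a x y : G) :
  gcommute a x -> gcommute a y -> gcommute a (gmul x y).
Proof.
  unfold gcommute; intros Hx Hy. rewrite gmulA, Hx, <- gmulA, Hy, gmulA. reflexivity.
Qed.

Lemma gcommute_inv (a x : G) : gcommute a x -> gcommute a (ginv x).
Proof.
  unfold gcommute; intro Hx.
  transitivity (gmul (ginv x) (gmul (gmul x a) (ginv x))).
  - rewrite !gmulA, gmulVl, gmul1l. reflexivity.
  - rewrite <- Hx, <- (gmulA a x), gmulVr, gmul1r. reflexivity.
Qed.

Lemma gcommute_zpow (a x : G) z : gcommute a x -> gcommute a (zpow x z).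
Proof.
  intro Hx. induction z as [|z IHz|z IHz] using Z.peano_ind.
  - unfold gcommute; simpl. rewrite gmul1l, gmul1r. reflexivity.
  - rewrite zpow_succ. apply gcommute_mul; assumption.
  - rewrite zpow_pred. apply gcommute_mul, gcommute_inv; assumption.
Qed.

Lemma gcommute_zpow_self (x : G) a b : gcommute (zpow x a) (zpow x b).
Proof. apply gcommute_zpow, gcommute_sym, gcommute_zpow. reflexivity. Qed.

Lemma zpow_mul_gcommute (a b : G) z : gcommute a b ->
  zpow (gmul a b) z = gmul (zpow a z) (zpow b z).
Proof.
  intro Hab. induction z as [|z IHz|z IHz] using Z.peano_ind.
  - simpl. rewrite gmul1l. reflexivity.
  - rewrite !zpow_succ, IHz.
    assert (Hba : gcommute (zpow b z) a) by apply gcommute_sym, gcommute_zpow, Hab.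
    rewrite <- !gmulA, (gmulA (zpow b z)), Hba, !gmulA. reflexivity.
  - rewrite !zpow_pred, IHz, ginv_mul.
    assert (Hba : gcommute (gmul (zpow b z) (ginv b)) (ginv a)).
    { apply gcommute_inv, gcommute_sym, gcommute_mul.
      - apply gcommute_zpow, Hab.
      - apply gcommute_inv, Hab. }
    rewrite <- !gmulA, (gmulA (zpow b z)), Hba, !gmulA. reflexivity.
Qed.

End GroupPowers.

Lemma sig_eq_proj1 (A : Type) (Q : A -> Prop) (a b : sig Q) :
  proj1_sig a = proj1_sig b -> a = b.
Proof. apply eq_sig_hprop. intros; apply proof_irrelevance. Qed.

Section Homomorphisms.
Context {G H : Grp} (f : G -> H) (Hf : is_hom f).

Lemma hom_one : f gone = gone.
Proof.
  assert (Hsq : gmul (f gone) (f gone) = gmul (f gone) gone).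
  { rewrite <- Hf, gmul1l, gmul1r. reflexivity. }
  rewrite <- (gmul1l (f gone)), <- (gmulVl (f gone)), <- gmulA, Hsq, gmul1r, gmulVl.
  reflexivity.
Qed.

Lemma hom_inv x : f (ginv x) = ginv (f x).
Proof. symmetry. apply ginv_unique. rewrite <- Hf, gmulVr. exact hom_one. Qed.

Lemma hom_zpow x z : f (zpow x z) = zpow (f x) z.
Proof.
  induction z as [|z IHz|z IHz] using Z.peano_ind.
  - exact hom_one.
  - rewrite !zpow_succ, Hf, IHz. reflexivity.
  - rewrite !zpow_pred, Hf, IHz, hom_inv. reflexivity.
Qed.

Lemma image_mul (y1 y2 : H) :
  (exists x, f x = y1) -> (exists x, f x = y2) -> exists x, f x = gmul y1 y2.
Proof. intros [x1 <-] [x2 <-]. exists (gmul x1 x2). apply Hf. Qed.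

Lemma image_inv (y : H) : (exists x, f x = y) -> exists x, f x = ginv y.
Proof. intros [x <-]. exists (ginv x). apply hom_inv. Qed.

Definition image_grp : Grp.
Proof.
  refine {| carrier := {y : H | exists x, f x = y};
            gmul a b := exist _ _ (image_mul _ _ (proj2_sig a) (proj2_sig b));
            ginv a := exist _ _ (image_inv _ (proj2_sig a));
            gone := exist _ gone (ex_intro _ gone hom_one) |};
    intros; apply sig_eq_proj1; simpl.
  - apply gmulA.
  - apply gmul1l.
  - apply gmul1r.
  - apply gmulVl.
  - apply gmulVr.
Defined.

Lemma image_incl_hom : @is_hom image_grp H (@proj1_sig _ _).
Proof. intros x y. reflexivity. Qed.

End Homomorphisms.

Section Presentations.
Context {P : Grp} {u v : P} {a b : Z} (HP : is_presentation2 P u v a b).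

Lemma presentation_hom_ext {H : Grp} (g1 g2 : P -> H) :
  is_hom g1 -> is_hom g2 -> g1 u = g2 u -> g1 v = g2 v -> g1 = g2.
Proof.
  intros Hg1 Hg2 Hu Hv.
  assert (Hrel : zpow (g1 u) a = zpow (g1 v) b).
  { rewrite <- !hom_zpow by exact Hg1. f_equal. apply (proj1 HP). }
  destruct (proj2 HP H _ _ Hrel) as [g [_ Hg]].
  transitivity g; [symmetry|]; apply Hg; auto.
Qed.

Lemma presentation_hom_onto {G : Grp} (f : G -> P) (Hf : is_hom f) :
  (exists x, f x = u) -> (exists x, f x = v) -> forall y, exists x, f x = y.
Proof.
  intros Hu Hv.
  pose (iu := exist _ u Hu : image_grp f Hf).
  pose (iv := exist _ v Hv : image_grp f Hf).
  assert (Hrel : zpow iu a = zpow iv b).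
  { apply sig_eq_proj1.
    pose proof (hom_zpow _ (image_incl_hom f Hf)) as Hincl.
    exact (eq_trans (Hincl iu a) (eq_trans (proj1 HP) (eq_sym (Hincl iv b)))). }
  destruct (proj2 HP _ iu iv Hrel) as [g [[Hg [Hgu Hgv]] _]].
  assert (Hid : (fun y => proj1_sig (g y)) = (fun y => y)).
  { apply presentation_hom_ext.
    - intros x y. rewrite Hg. reflexivity.
    - intros x y. reflexivity.
    - rewrite Hgu. reflexivity.
    - rewrite Hgv. reflexivity. }
  intro y. rewrite <- (f_equal (fun h => h y) Hid). exact (proj2_sig (g y)).
Qed.

End Presentations.

Section TwoGeneratorRelation.
Context {P : Grp} (u v : P) (r s k n : Z).
Hypothesis Hrel : zpow u r = zpow v s.
Hypothesis Hkn : - r * k + s * n = 1.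

Lemma relation_lift : zpow (zpow u n) (r * k) = zpow (zpow v k) (r * k + 1).
Proof.
  replace (r * k + 1) with (s * n) by lia.
  rewrite !zpow_mul. replace (n * (r * k)) with (r * (k * n)) by ring.
  rewrite <- zpow_mul, Hrel, zpow_mul. f_equal. ring.
Qed.

Lemma powers_combine_to_u : gmul (zpow (zpow u n) s) (zpow (zpow v k) (- s)) = u.
Proof.
  rewrite !zpow_mul. replace (k * - s) with (s * - k) by ring.
  rewrite <- (zpow_mul v s), <- Hrel, zpow_mul, <- zpow_add.
  transitivity (zpow u 1); [f_equal; lia | apply zpow_1].
Qed.

Lemma powers_combine_to_v : gmul (zpow (zpow u n) r) (zpow (zpow v k) (- r)) = v.
Proof.
  rewrite !zpow_mul, (Z.mul_comm n), <- (zpow_mul u r), Hrel, zpow_mul, <- zpow_add.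
  transitivity (zpow v 1); [f_equal; lia | apply zpow_1].
Qed.

Lemma relator_central a b z : gcommute (zpow v s) (zpow (gmul (zpow u a) (zpow v b)) z).
Proof.
  apply gcommute_zpow, gcommute_mul.
  - rewrite <- Hrel. apply gcommute_zpow_self.
  - apply gcommute_zpow_self.
Qed.

End TwoGeneratorRelation.

Theorem mainTheorem6 (r s k n : Z)
  (hcop : Z.gcd r s = 1) (hkn : - r * k + s * n = 1)
  (P : Grp) (u v : P) (hP : is_presentation2 P u v r s)
  (Pt : Grp) (ut vt : Pt) (hPt : is_presentation2 Pt ut vt (r * k) (r * k + 1)) :
  let p := r * k in
  let m := gmul (zpow u n) (zpow v (- k)) in
  let l := gmul (zpow v s) (zpow m (- (r * s))) in
  let mt := gmul ut (ginv vt) in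
  let lt := gmul (zpow vt (p + 1)) (zpow mt (- (p * (p + 1)))) in
  exists f : Pt -> P,
    is_hom f /\ f ut = zpow u n /\ f vt = zpow v k /\
    (forall y : P, exists x : Pt, f x = y) /\
    f mt = m /\ f lt = zpow l (k * n).
Proof.
  intros p m l mt lt.
  pose proof (proj1 hP) as Hrel.
  destruct (proj2 hPt P _ _ (relation_lift u v r s k n Hrel hkn)) as [f [[Hf [Hfu Hfv]] _]].
  assert (Hfm : f mt = m).
  { unfold mt, m. rewrite Hf, (hom_inv f Hf), Hfu, Hfv, zpow_opp. reflexivity. }
  assert (Hfpow : forall a b, f (gmul (zpow ut a) (zpow vt b))
                              = gmul (zpow (zpow u n) a) (zpow (zpow v k) b)).
  { intros a b. rewrite Hf, !(hom_zpow f Hf), Hfu, Hfv. reflexivity. }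
  exists f. repeat split; try assumption.
  - apply (presentation_hom_onto hP f Hf).
    + eexists. rewrite Hfpow. exact (powers_combine_to_u u v r s k n Hrel hkn).
    + eexists. rewrite Hfpow. exact (powers_combine_to_v u v r s k n Hrel hkn).
  - unfold lt, l. rewrite Hf, !(hom_zpow f Hf), Hfv, Hfm. unfold m.
    rewrite (zpow_mul_gcommute _ _ _ (relator_central u v r s Hrel _ _ _)), !zpow_mul.
    replace (p + 1) with (s * n) by lia. f_equal; f_equal; unfold p; ring.
Qed.
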